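(* Consider a fixed time interval $[0,T]$ divided into $L$ time steps, so that the CFL number $\mu=\mu(L)$ is proportional to the step size $T/L$ and hence $\mu(L)\to0$ as $L\to\infty$. Let $\mathbf{T}^{(L)}(\mu)=\mathbf{T}_S(\mu)\,\mathbf{T}_{\mathrm{CGC}}(\mu)$ be the PFASST iteration matrix for $L$ time steps (as defined in the context) with $\mu=\mu(L)$. Then $$\rho\Big(\lim_{L\to\infty}\mathbf{T}^{(L)}(\mu(L))\Big)\ge1.$$
   Context: Fix positive integers $M$ (collocation nodes), $N$ (spatial degrees of freedom), and coarse sizes $\tilde M\le M$, $\tilde N<N$ (coarsening in space). $\mathbf{Q}=(q_{m,j})\in\mathbb{R}^{M\times M}$ with $q_{m,j}=\int_0^{\tau_m}\ell_j(s)\,ds$ is the collocation matrix for the (right) Gauss–Radau nodes $0<\tau_1<\dots<\tau_M=1$ on $[0,1]$; $\mathbf{Q}_\Delta$, $\tilde{\mathbf{Q}}_\Delta$ are lower-triangular weight matrices of simpler quadrature rules on the fine and coarse nodes. $\mathbf{A}\in\mathbb{C}^{N\times N}$, $\tilde{\mathbf{A}}\in\mathbb{C}^{\tilde N\times\tilde N}$. $\mathbf{N}_M$, $\tilde{\mathbf{N}}_{\tilde M}$ are the $M\times M$, $\tilde M\times\tilde M$ matrices with ones in the last column and zeros elsewhere; $\mathbf{H}=\mathbf{N}_M\otimes\mathbf{I}_N$, $\tilde{\mathbf{H}}=\tilde{\mathbf{N}}_{\tilde M}\otimes\mathbf{I}_{\tilde N}$; $\mathbf{E}\in\mathbb{R}^{L\times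 L}$ has ones on the first subdiagonal and zeros elsewhere. $\mathbf{C}=\mathbf{I}_{LMN}-\mu\,\mathbf{I}_L\otimes\mathbf{Q}\otimes\mathbf{A}-\mathbf{E}\otimes\mathbf{H}$, $\hat{\mathbf{P}}=\mathbf{I}_{LMN}-\mu\,\mathbf{I}_L\otimes\mathbf{Q}_\Delta\otimes\mathbf{A}$, $\tilde{\mathbf{P}}=\mathbf{I}_{L\tilde M\tilde N}-\mu\,\mathbf{I}_L\otimes\tilde{\mathbf{Q}}_\Delta\otimes\tilde{\mathbf{A}}-\mathbf{E}\otimes\tilde{\mathbf{H}}$ (both invertible). Restriction $\mathbf{T}_F^C=\mathbf{I}_L\otimes\mathbf{T}_{F,Q}^C\otimes\mathbf{T}_{F,A}^C$ and interpolation $\mathbf{T}_C^F=\mathbf{I}_L\otimes\mathbf{T}_{C,Q}^F\otimes\mathbf{T}_{C,A}^F$ (standard Lagrangian transfer on the nodes and in space, $\mathbf{T}_{F,A}^C\in\mathbb{R}^{\tilde N\times N}$, $\mathbf{T}_{C,A}^F\in\mathbb{R}^{N\times\tilde N}$), with $(\mathbf{E}\otimes\tilde{\mathbf{H}})\mathbf{T}_F^C=\mathbf{T}_F^C(\mathbf{E}\otimes\mathbf{H})$. $\mathbf{T}_S(\mu)=\mathbf{I}_{LMN}-\hat{\mathbf{P}}^{-1}\mathbf{C}$, $\mathbf{T}_{\mathrm{CGC}}(\mu)=\mathbf{I}_{LMN}-\mathbf{T}_C^F\tilde{\mathbf{P}}^{-1}\mathbf{T}_F^C\mathbf{C}$.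 The limit $L\to\infty$ of these block matrices of growing size is understood as an infinite block Toeplitz operator in the sense of Bolten–Rittich: for an infinite block Toeplitz matrix with matrix-valued generating symbol $\hat{\mathbf{T}}(x)$, $x\in[-\pi,\pi]$, its spectral radius is $\operatorname{ess\,sup}_{x\in[-\pi,\pi]}\rho(\hat{\mathbf{T}}(x))$; $\rho$ denotes the spectral radius. *)

From HB Require Import structures.
From mathcomp Require Import all_boot all_order all_algebra.
From mathcomp Require Import all_classical all_reals all_analysis.
From mathcomp Require Import complex mxtens.

Set Implicit Arguments.
Unset Strict Implicit.
Unset Printing Implicit Defensive.

Import Order.TTheory GRing.Theory Num.Theory.
Import numFieldNormedType.Exports.
Local Open Scope classical_set_scope.
Local Open Scope ring_scope.

Section PFASST.
Variable R : realType.
Local Notation C := (R[i]).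

Definition lagr {n : nat} (t : 'I_n -> R) (j : 'I_n) : {poly R} :=
  \prod_(k < n | k != j) (('X - (t k)%:P) * ((t j - t k)^-1)%:P).

Definition pint (p : {poly R}) (a b : R) : R :=
  \sum_(i < size p) p`_i * (b ^+ i.+1 - a ^+ i.+1) / i.+1%:R.

Definition is_right_radau {n : nat} (t : 'I_n -> R) : Prop :=
  [/\ (forall i j : 'I_n, (i < j)%N -> t i < t j),
      (forall i, 0 < t i),
      (forall i : 'I_n, i.+1 = n -> t i = 1) &
      exists w : 'I_n -> R, forall p : {poly R},
        (size p <= (2 * n).-1)%N -> \sum_(i < n) w i * p.[t i] = pint p 0 1].

Definition Qcoll {n : nat} (t : 'I_n -> R) : 'M[R]_n :=
  \matrix_(m, j) pint (lagr t j) 0 (t m).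

Definition TQ_CF {m mc : nat} (tf : 'I_m -> R) (tc : 'I_mc -> R) : 'M[R]_(m, mc) :=
  \matrix_(i, j) (lagr tc j).[tf i].
Definition TQ_FC {m mc : nat} (tf : 'I_m -> R) (tc : 'I_mc -> R) : 'M[R]_(mc, m) :=
  \matrix_(j, i) (lagr tf i).[tc j].

Definition Nmat (n : nat) : 'M[R]_n := \matrix_(i, j) (j.+1 == n)%:R.
Definition Emat (L : nat) : 'M[R]_L := \matrix_(i, j) (i == j.+1 :> nat)%:R.

Definition cplx {m n : nat} (X : 'M[R]_(m, n)) : 'M[C]_(m, n) :=
  map_mx (real_complex R) X.

Variables (M N Mc Nc : nat) (tf : 'I_M -> R) (tc : 'I_Mc -> R)
  (QD : 'M[R]_M) (QDc : 'M[R]_Mc) (A : 'M[C]_N) (Ac : 'M[C]_Nc)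
  (TFCA : 'M[R]_(Nc, N)) (TCFA : 'M[R]_(N, Nc)).

Definition Hf : 'M[C]_(M * N) := cplx (Nmat M) *t (1%:M : 'M[C]_N).
Definition Hc : 'M[C]_(Mc * Nc) := cplx (Nmat Mc) *t (1%:M : 'M[C]_Nc).

Definition Cmat (L : nat) (mu : R) : 'M[C]_(L * (M * N)) :=
  1%:M - real_complex R mu *: ((1%:M : 'M[C]_L) *t (cplx (Qcoll tf) *t A))
       - cplx (Emat L) *t Hf.
Definition Phat (L : nat) (mu : R) : 'M[C]_(L * (M * N)) :=
  1%:M - real_complex R mu *: ((1%:M : 'M[C]_L) *t (cplx QD *t A)).
Definition Ptil (L : nat) (mu : R) : 'M[C]_(L * (Mc * Nc)) :=
  1%:M - real_complex R mu *: ((1%:M : 'M[C]_L) *t (cplx QDc *t Ac))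
       - cplx (Emat L) *t Hc.
Definition TFC (L : nat) : 'M[C]_(L * (Mc * Nc), L * (M * N)) :=
  (1%:M : 'M[C]_L) *t (cplx (TQ_FC tf tc) *t cplx TFCA).
Definition TCF (L : nat) : 'M[C]_(L * (M * N), L * (Mc * Nc)) :=
  (1%:M : 'M[C]_L) *t (cplx (TQ_CF tf tc) *t cplx TCFA).

Definition T_S (L : nat) (mu : R) : 'M[C]_(L * (M * N)) :=
  1%:M - invmx (Phat L mu) *m Cmat L mu.
Definition T_CGC (L : nat) (mu : R) : 'M[C]_(L * (M * N)) :=
  1%:M - TCF L *m invmx (Ptil L mu) *m TFC L *m Cmat L mu.
Definition T_PFASST (L : nat) (mu : R) : 'M[C]_(L * (M * N)) :=
  T_S L mu *m T_CGC L mu.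

End PFASST.

Section Toeplitz.
Variable R : realType.
Local Notation C := (R[i]).

(** Block (i, j) (of size K x K) of an (L*K) x (L*K) matrix; 0 if out of range. *)
Definition blk {L K : nat} (X : 'M[C]_(L * K)) (i j : nat) : 'M[C]_K :=
  match (insub i : option 'I_L), (insub j : option 'I_L) with
  | Some i', Some j' => \matrix_(a, b) X (mxtens_index (i', a)) (mxtens_index (j', b))
  | _, _ => 0
  end.

(** The block matrices X L (L -> oo) converge, blockwise and entrywise, to the
    infinite block lower-triangular Toeplitz operator with blocks t 0, t 1, ...
    (block (i,j) equal to t (i - j) for i >= j, and 0 for i < j). *)
Definition block_toeplitz_limit {K : nat} (X : forall L : nat, 'M[C]_(L * K))
    (t : nat -> 'M[C]_K) : Prop :=
  forall (i j : nat) (a b : 'I_K),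
    (fun L => Normc.normc (blk (X L) i j a b - (if (j <= i)%N then t (i - j)%N else 0) a b))
      @ \oo --> (0 : R).

Definition expi (y : R) : C := Complex (cos y) (sin y).

(** Generating symbol sum_k t_k e^{i k x} of a block Toeplitz operator whose
    blocks vanish from index K on. *)
Definition symbol {n : nat} (t : nat -> 'M[C]_n) (K : nat) (x : R) : 'M[C]_n :=
  \sum_(k < K) expi (k%:R * x) *: t k.

Definition specrad {n : nat} (B : 'M[C]_n) : R :=
  sup [set Normc.normc l | l in [set l : C | eigenvalue B l]].

Definition ess_sup_on (D : set R) (f : R -> R) : \bar R :=
  ereal_inf [set y : \bar R | \forall x \ae (@lebesgue_measure R), D x -> ((f x)%:E <= y)%E].

End Toeplitz.

From HB Require Import structures.
From mathcomp Require Import all_boot all_order all_algebra.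
From mathcomp Require Import all_classical all_reals all_analysis.
From mathcomp Require Import complex mxtens.
From mathcomp Require Import zify.

(* Every matrix entering the PFASST iteration for L time steps is a block
   lower-triangular block-Toeplitz matrix whose blocks do not depend on L; so
   are the inverses of the two preconditioners, whose blocks form a block
   Neumann series.  Hence T^(L)(mu) has the blocks of one sequence tau(mu),
   and since mu(L) -> 0 the blocks converge to those of tau(0).  Because the
   coarse shift H~ intertwines the restriction with the fine shift H, tau(0)
   has the single nonzero block H (I - T_C^F T_F^C), at position 1, so the
   symbol of the limit is e^{ix} H (I - T_C^F T_F^C).  As Nc < N, some w <> 0
   is killed by the spatial restriction; the vector equal to w at every
   collocation node is then an eigenvector of the symbol with eigenvalue
   e^{ix}, so the spectral radius of the symbol is at least 1 for every x. *)

Set Implicit Arguments.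
Unset Strict Implicit.
Unset Printing Implicit Defensive.
Import Order.TTheory GRing.Theory Num.Theory.
Import numFieldNormedType.Exports.
Local Open Scope classical_set_scope.
Local Open Scope ring_scope.

(** * Block lower-triangular Toeplitz matrices *)

Section BlockToeplitz.
Variable K : comUnitRingType.

Lemma big_mxtens_index L q (F : 'I_(L * q) -> K) :
  \sum_x F x = \sum_(k < L) \sum_(c < q) F (mxtens_index (k, c)).
Proof.
rewrite (reindex (@mxtens_index L q)) /=; last first.
  by exists (@mxtens_unindex L q) => x _; [apply: mxtens_indexK | apply: mxtens_unindexK].
by rewrite pair_big; apply: eq_bigr => -[].
Qed.

Lemma eq_mxtens L p M q (X Y : 'M[K]_(L * p, M * q)) :
  (forall i a j b, X (mxtens_index (i, a)) (mxtens_index (j, b)) =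
                   Y (mxtens_index (i, a)) (mxtens_index (j, b))) -> X = Y.
Proof.
move=> eqXY; apply/matrixP=> x y.
by case: (mxtens_indexP x) => i a; case: (mxtens_indexP y) => j b; apply: eqXY.
Qed.

Lemma tensmxDr m n p q (X : 'M[K]_(m, n)) (Y1 Y2 : 'M[K]_(p, q)) :
  X *t (Y1 + Y2) = X *t Y1 + X *t Y2.
Proof. by apply: eq_mxtens => i a j b; rewrite !mxE !mxtens_indexK mulrDr. Qed.

Lemma tensmxNr m n p q (X : 'M[K]_(m, n)) (Y : 'M[K]_(p, q)) : X *t (- Y) = - (X *t Y).
Proof. by apply: eq_mxtens => i a j b; rewrite !mxE !mxtens_indexK mulrN. Qed.

Lemma tensmxZr m n p q (X : 'M[K]_(m, n)) (c : K) (Y : 'M[K]_(p, q)) :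
  X *t (c *: Y) = c *: (X *t Y).
Proof. by apply: eq_mxtens => i a j b; rewrite !mxE !mxtens_indexK mulrCA. Qed.

Lemma tensmx11 L q : (1%:M : 'M[K]_L) *t (1%:M : 'M[K]_q) = 1%:M.
Proof.
apply: eq_mxtens => i a j b; rewrite tensmxE !mxE.
by rewrite (inj_eq (can_inj (@mxtens_indexK L q))) xpair_eqE -mulnb natrM.
Qed.

Definition btoep L p q (t : nat -> 'M[K]_(p, q)) : 'M[K]_(L * p, L * q) :=
  \matrix_(x, y) (if ((mxtens_unindex y).1 <= (mxtens_unindex x).1)%N
     then t ((mxtens_unindex x).1 - (mxtens_unindex y).1)%N
            (mxtens_unindex x).2 (mxtens_unindex y).2 else 0).

Lemma btoepE L p q (t : nat -> 'M[K]_(p, q)) i a j b :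
  btoep L t (mxtens_index (i, a)) (mxtens_index (j, b)) =
  if (j <= i)%N then t (i - j)%N a b else 0.
Proof. by rewrite mxE !mxtens_indexK. Qed.

Lemma eq_btoep L p q (s t : nat -> 'M[K]_(p, q)) : s =1 t -> btoep L s = btoep L t.
Proof. by move=> eq_st; apply: eq_mxtens => i a j b; rewrite !btoepE eq_st. Qed.

Lemma btoepB L p q (s t : nat -> 'M[K]_(p, q)) :
  btoep L s - btoep L t = btoep L (fun n => s n - t n).
Proof.
apply: eq_mxtens => i a j b; rewrite !mxE !mxtens_indexK.
by case: ifP; rewrite ?subr0 // !mxE.
Qed.

Definition mxconv p q r (s : nat -> 'M[K]_(p, q)) (t : nat -> 'M[K]_(q, r)) n :=
  \sum_(k < n.+1) s k *m t (n - k)%N.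

Lemma eq_mxconv p q r (s1 s2 : nat -> 'M[K]_(p, q)) (t1 t2 : nat -> 'M[K]_(q, r)) :
  s1 =1 s2 -> t1 =1 t2 -> mxconv s1 t1 =1 mxconv s2 t2.
Proof. by move=> eq_s eq_t n; apply: eq_bigr => k _; rewrite eq_s eq_t. Qed.

Lemma big_ord_segment_rev L i j (G : nat -> K) : (i < L)%N -> (j <= i)%N ->
  \sum_(k < L | (j <= k <= i)%N) G k = \sum_(m < (i - j).+1) G (i - m)%N.
Proof.
move=> iL ji.
have -> : \sum_(k < L | (j <= k <= i)%N) G k = \sum_(j <= k < i.+1) G k.
  rewrite (big_nat_widen _ _ _ _ _ iL) big_geq_mkord.
  by apply: eq_bigl => k; rewrite andbC ltnS.
rewrite -{1}(add0n j) big_addn big_nat_rev /= big_mkord add0n subSn //.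
by apply: eq_bigr => m _; congr G; have := ltn_ord m; lia.
Qed.

Lemma mul_btoep L p q r (s : nat -> 'M[K]_(p, q)) (t : nat -> 'M[K]_(q, r)) :
  btoep L s *m btoep L t = btoep L (mxconv s t).
Proof.
apply: eq_mxtens => i a j b; rewrite btoepE mxE big_mxtens_index.
under eq_bigr => k _ do under eq_bigr => c _ do rewrite !btoepE.
transitivity (\sum_(k < L | (j <= k <= i)%N) (s (i - k)%N *m t (k - j)%N) a b).
  rewrite [RHS]big_mkcond; apply: eq_bigr => k _; rewrite mxE.
  case: (leqP k i) => ki; case: (leqP j k) => jk; rewrite ?andbF //=;
    by apply: big1 => c _; rewrite ?mul0r ?mulr0.
case: (leqP j i) => ji; last first.
  by apply: big1 => k /andP[jk ki]; move: (leq_trans jk ki); rewrite leqNgt ji.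
rewrite (big_ord_segment_rev (fun k => (s (i - k)%N *m t (k - j)%N) a b) (ltn_ord i) ji).
rewrite /mxconv summxE.
by apply: eq_bigr => m _; congr ((s _ *m t _) a b); have := ltn_ord m; lia.
Qed.

Definition bidiag p q (X0 X1 : 'M[K]_(p, q)) (n : nat) : 'M[K]_(p, q) :=
  match n with 0 => X0 | 1 => X1 | _ => 0 end.

Definition subdiag L : 'M[K]_L := \matrix_(i, j) (i == j.+1 :> nat)%:R.

Lemma btoep_bidiag L p q (X0 X1 : 'M[K]_(p, q)) :
  btoep L (bidiag X0 X1) = 1%:M *t X0 + subdiag L *t X1.
Proof.
apply: eq_mxtens => i a j b; rewrite btoepE mxE !tensmxE !mxE -val_eqE /=.
case: (leqP j i) => [ji|ij]; last first.
  by rewrite (ltn_eqF ij) (ltn_eqF (leqW ij)) !mul0r addr0.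
rewrite -(subnKC ji); move: (i - j)%N => d.
rewrite addKn -[X in _ == X]addn0 eqn_add2l -addn1 eqn_add2l.
by case: d => [|[|d]]; rewrite /= ?mul1r ?mul0r ?addr0 ?add0r ?mxE.
Qed.

Lemma btoep1 L q : btoep L (bidiag 1%:M 0) = 1%:M :> 'M[K]_(L * q).
Proof. by rewrite btoep_bidiag tensmx0 addr0 tensmx11. Qed.

Lemma btoep_shift_pencil L q (c : K) (Y H : 'M[K]_q) :
  1%:M - c *: (1%:M *t Y) - subdiag L *t H = btoep L (bidiag (1%:M - c *: Y) (- H)).
Proof. by rewrite btoep_bidiag tensmxNr tensmxDr tensmxNr tensmxZr tensmx11. Qed.

Lemma mxconv_bidiagl p q r (X0 X1 : 'M[K]_(p, q)) (t : nat -> 'M[K]_(q, r)) n :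
  mxconv (bidiag X0 X1) t n = X0 *m t n + (if n is n'.+1 then X1 *m t n' else 0).
Proof.
rewrite /mxconv; case: n => [|n]; first by rewrite big_ord1 addr0 subn0.
rewrite big_ord_recl big_ord_recl big1 ?addr0 => [|k _]; last by rewrite mul0mx.
by rewrite subn0 subSS subn0.
Qed.

Lemma mxconv_bidiagr p q r (s : nat -> 'M[K]_(p, q)) (Y0 Y1 : 'M[K]_(q, r)) n :
  mxconv s (bidiag Y0 Y1) n = s n *m Y0 + (if n is n'.+1 then s n' *m Y1 else 0).
Proof.
rewrite /mxconv; case: n => [|n]; first by rewrite big_ord1 addr0 subn0.
rewrite big_ord_recr big_ord_recr big1 /= => [|k _].
  by rewrite add0r subnn subSn // subnn addrC.
have [m ->] : exists m, (n.+1 - k = m.+2)%N by exists (n - k.+1)%N; have := ltn_ord k; lia.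
by rewrite mulmx0.
Qed.

Lemma invmx_btoep L q (s t : nat -> 'M[K]_q) :
  mxconv s t =1 bidiag 1%:M 0 -> invmx (btoep L s) = btoep L t.
Proof.
move=> st1; have st : btoep L s *m btoep L t = 1%:M.
  by rewrite mul_btoep (eq_btoep _ st1) btoep1.
have [u _] := mulmx1_unit st.
by rewrite -[invmx _]mulmx1 -st mulmxA mulVmx // mul1mx.
Qed.

Lemma btoep_unit0 L q (s : nat -> 'M[K]_q) :
  (0 < L)%N -> btoep L s \in unitmx -> s 0%N \in unitmx.
Proof.
case: L s => // L s _ u.
pose Z : 'M[K]_q :=
  \matrix_(c, b) invmx (btoep L.+1 s) (mxtens_index (ord0, c)) (mxtens_index (ord0, b)).
suff /mulmx1_unit[] : s 0%N *m Z = 1%:M by [].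
apply/matrixP => a b.
move/matrixP: (mulmxV u) => /(_ (mxtens_index (ord0, a)) (mxtens_index (ord0, b))).
rewrite !mxE big_mxtens_index big_ord_recl [X in _ + X]big1 ?addr0 => [|k _]; last first.
  by apply: big1 => c _; rewrite btoepE mul0r.
rewrite (can_eq (@mxtens_indexK _ _)) xpair_eqE eqxx => <-.
by apply: eq_bigr => c _; rewrite btoepE /Z mxE.
Qed.

(* Blocks of the inverse of btoep L (bidiag D (- H)), a block Neumann series. *)
Definition geom_inv q (D H : 'M[K]_q) (n : nat) := (invmx D *m H) ^+ n *m invmx D.

Lemma mxconv_bidiag_geom_inv q (D H : 'M[K]_q) : D \in unitmx ->
  mxconv (bidiag D (- H)) (geom_inv D H) =1 bidiag 1%:M 0.
Proof.
move=> uD n; rewrite mxconv_bidiagl /geom_inv.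
case: n => [|n]; first by rewrite expr0 mul1mx mulmxV // addr0.
rewrite exprS -mulmxE !mulmxA mulmxV // mul1mx !mulNmx addrN.
by case: n.
Qed.

Lemma geom_inv1 q (H : 'M[K]_q) n : geom_inv 1%:M H n = H ^+ n.
Proof. by rewrite /geom_inv invmx1 mul1mx mulmx1. Qed.

Lemma intertwineX p q (X : 'M[K]_p) (Y : 'M[K]_q) (T : 'M[K]_(p, q)) n :
  X *m T = T *m Y -> X ^+ n *m T = T *m Y ^+ n.
Proof.
move=> XT; elim: n => [|n IH]; first by rewrite !expr0 mul1mx mulmx1.
by rewrite !exprSr -!mulmxE -mulmxA XT mulmxA IH mulmxA.
Qed.

End BlockToeplitz.

Lemma exists_kernel_vector (F : fieldType) n m (T : 'M[F]_(n, m)) : (n < m)%N ->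
  exists2 w : 'cV[F]_m, w != 0 & T *m w = 0.
Proof.
move=> nm; have : kermx T^T != 0.
  by rewrite kermx_eq0 /row_free mxrank_tr neq_ltn (leq_ltn_trans (rank_leq_row T) nm).
case/rowV0Pn => v /sub_kermxP vT v0; exists v^T; first by rewrite trmx_eq0.
by rewrite -[T]trmxK -trmx_mul vT trmx0.
Qed.

(** * The PFASST iteration as a block Toeplitz matrix *)

Section PFASSTSymbol.
Variable R : realType.
Local Notation C := R[i].
Local Notation rc := (real_complex R).
Variables (M N Mc Nc : nat) (tf : 'I_M -> R) (tc : 'I_Mc -> R)
  (QD : 'M[R]_M) (QDc : 'M[R]_Mc) (A : 'M[C]_N) (Ac : 'M[C]_Nc)
  (TFCA : 'M[R]_(Nc, N)) (TCFA : 'M[R]_(N, Nc)).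
Local Notation Hf := (Hf R M N).
Local Notation Hc := (Hc R Mc Nc).

Lemma cplx_Emat L : cplx (Emat R L) = subdiag C L.
Proof. by apply/matrixP => i j; rewrite !mxE rmorph_nat. Qed.

Definition Cmat_diag (x : R) : 'M[C]_(M * N) := 1%:M - rc x *: (cplx (Qcoll tf) *t A).
Definition Phat_diag (x : R) : 'M[C]_(M * N) := 1%:M - rc x *: (cplx QD *t A).
Definition Ptil_diag (x : R) : 'M[C]_(Mc * Nc) := 1%:M - rc x *: (cplx QDc *t Ac).
Definition TFC_blk : 'M[C]_(Mc * Nc, M * N) := cplx (TQ_FC tf tc) *t cplx TFCA.
Definition TCF_blk : 'M[C]_(M * N, Mc * Nc) := cplx (TQ_CF tf tc) *t cplx TCFA.

(* Block sequences of T_S, T_CGC and T_PFASST: unlike the matrices, they do not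
   depend on L. *)
Definition Cmat_seq (x : R) := bidiag (Cmat_diag x) (- Hf).
Definition T_S_seq (x : R) (n : nat) :=
  bidiag 1%:M 0 n - mxconv (geom_inv (Phat_diag x) 0) (Cmat_seq x) n.
Definition T_CGC_seq (x : R) (n : nat) :=
  bidiag 1%:M 0 n - mxconv (mxconv (mxconv (bidiag TCF_blk 0)
    (geom_inv (Ptil_diag x) Hc)) (bidiag TFC_blk 0)) (Cmat_seq x) n.
Definition T_PFASST_seq (x : R) := mxconv (T_S_seq x) (T_CGC_seq x).

Lemma Cmat_btoep L x : Cmat tf A L x = btoep L (Cmat_seq x).
Proof. by rewrite /Cmat cplx_Emat btoep_shift_pencil. Qed.

Lemma Phat_btoep L x : Phat QD A L x = btoep L (bidiag (Phat_diag x) (- 0)).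
Proof. by rewrite -btoep_shift_pencil tensmx0 subr0. Qed.

Lemma Ptil_btoep L x : Ptil QDc Ac L x = btoep L (bidiag (Ptil_diag x) (- Hc)).
Proof. by rewrite /Ptil cplx_Emat btoep_shift_pencil. Qed.

Lemma TFC_btoep L : TFC tf tc TFCA L = btoep L (bidiag TFC_blk 0).
Proof. by rewrite btoep_bidiag tensmx0 addr0. Qed.

Lemma TCF_btoep L : TCF tf tc TCFA L = btoep L (bidiag TCF_blk 0).
Proof. by rewrite btoep_bidiag tensmx0 addr0. Qed.

Lemma T_PFASST_btoep L x : Phat_diag x \in unitmx -> Ptil_diag x \in unitmx ->
  T_PFASST tf tc QD QDc A Ac TFCA TCFA L x = btoep L (T_PFASST_seq x).
Proof.
move=> uPhat uPtil; rewrite /T_PFASST /T_S /T_CGC -!(btoep1 _ L (M * N)).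
rewrite Phat_btoep Cmat_btoep Ptil_btoep TFC_btoep TCF_btoep.
rewrite (invmx_btoep _ (mxconv_bidiag_geom_inv _ uPhat)).
rewrite (invmx_btoep _ (mxconv_bidiag_geom_inv _ uPtil)).
by rewrite !mul_btoep !btoepB mul_btoep.
Qed.

(* Block (1, 0) of the intertwining hypothesis for L = 2. *)
Lemma Hc_TFC_comm :
  (cplx (Emat R 2) *t Hc) *m TFC tf tc TFCA 2 =
    TFC tf tc TFCA 2 *m (cplx (Emat R 2) *t Hf) ->
  Hc *m TFC_blk = TFC_blk *m Hf.
Proof.
have shift X : cplx (Emat R 2) *t X = btoep 2 (bidiag 0 X).
  by rewrite cplx_Emat btoep_bidiag tensmx0 add0r.
rewrite !shift TFC_btoep !mul_btoep => /matrixP comm; apply/matrixP => a b.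
move: (comm (mxtens_index (ord_max, a)) (mxtens_index (ord0, b))).
by rewrite !btoepE !mxconv_bidiagl /= !mul0mx add0r addr0.
Qed.

Lemma pencil0 q (Y : 'M[C]_q) : 1%:M - rc 0 *: Y = 1%:M.
Proof. by rewrite rmorph0 scale0r subr0. Qed.

Lemma T_S_seq0 : T_S_seq 0 =1 bidiag 0 Hf.
Proof.
move=> n; rewrite /T_S_seq /Cmat_seq /Cmat_diag /Phat_diag !pencil0.
rewrite mxconv_bidiagr.
by case: n => [|[|n]]; rewrite /= !geom_inv1 ?expr0 ?expr0n /= ?mulmx1 ?mul1mx ?mul0mx
  ?add0r ?addr0 ?subrr ?sub0r ?opprK ?oppr0.
Qed.

Lemma T_CGC_seq0 : Hc *m TFC_blk = TFC_blk *m Hf ->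
  T_CGC_seq 0 =1 bidiag (1%:M - TCF_blk *m TFC_blk) 0.
Proof.
move=> comm n.
have coarse k : mxconv (mxconv (bidiag TCF_blk 0) (geom_inv (Ptil_diag 0) Hc))
    (bidiag TFC_blk 0) k = TCF_blk *m TFC_blk *m Hf ^+ k.
  rewrite mxconv_bidiagr mxconv_bidiagl /Ptil_diag pencil0 !geom_inv1.
  by case: k => [|k]; rewrite ?mul0mx ?mulmx0 !addr0 -mulmxA (intertwineX _ comm) mulmxA.
rewrite /T_CGC_seq (eq_mxconv coarse (frefl _)) /Cmat_seq /Cmat_diag pencil0 mxconv_bidiagr.
case: n => [|n]; first by rewrite expr0 !mulmx1 addr0.
by rewrite exprSr -mulmxE mulmx1 mulmxN mulmxA subrr subr0; case: n.
Qed.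

Lemma T_PFASST_seq0 : Hc *m TFC_blk = TFC_blk *m Hf ->
  T_PFASST_seq 0 =1 bidiag 0 (Hf *m (1%:M - TCF_blk *m TFC_blk)).
Proof.
move=> comm n; rewrite /T_PFASST_seq (eq_mxconv T_S_seq0 (T_CGC_seq0 comm)).
by rewrite mxconv_bidiagl mul0mx add0r; case: n => [|[|[|n]]]; rewrite /= ?mulmx0.
Qed.

End PFASSTSymbol.

(** * Entrywise convergence of matrix sequences *)

Section MatrixConvergence.
Variable R : realType.
Local Notation C := R[i].

(* R[i] carries its normed topology only through the alias R[i]^o. *)
Lemma cvgC_sum (I : Type) (r : seq I) (P : pred I) (F : I -> nat -> C) (G : I -> C) :
  (forall i, P i -> (F i : nat -> C^o) @ \oo --> (G i : C^o)) ->
  (fun n => \sum_(i <- r | P i) F i n : C^o) @ \oo --> (\sum_(i <- r | P i) G i : C^o).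
Proof. by move=> FG; apply: cvg_big => //; exact: add_continuous. Qed.

Lemma cvgC_prod (I : Type) (r : seq I) (P : pred I) (F : I -> nat -> C) (G : I -> C) :
  (forall i, P i -> (F i : nat -> C^o) @ \oo --> (G i : C^o)) ->
  (fun n => \prod_(i <- r | P i) F i n : C^o) @ \oo --> (\prod_(i <- r | P i) G i : C^o).
Proof. by move=> FG; apply: cvg_big => //; exact: mul_continuous. Qed.

Definition mx_cvg p q (X : nat -> 'M[C]_(p, q)) (Y : 'M[C]_(p, q)) :=
  forall a b, (fun n => X n a b : C^o) @ \oo --> (Y a b : C^o).

Lemma mx_cvg_cst p q (Y : 'M[C]_(p, q)) : mx_cvg (fun=> Y) Y.
Proof. by move=> a b; apply: cvg_cst. Qed.

Lemma mx_cvgB p q (X1 X2 : nat -> 'M[C]_(p, q)) Y1 Y2 :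
  mx_cvg X1 Y1 -> mx_cvg X2 Y2 -> mx_cvg (fun n => X1 n - X2 n) (Y1 - Y2).
Proof.
move=> X1Y1 X2Y2 a b; rewrite !mxE; under eq_cvg do rewrite !mxE.
exact: cvgB (X1Y1 a b) (X2Y2 a b).
Qed.

Lemma mx_cvgZ p q (c : nat -> C) c0 (X : nat -> 'M[C]_(p, q)) Y :
  (c : nat -> C^o) @ \oo --> (c0 : C^o) -> mx_cvg X Y -> mx_cvg (fun n => c n *: X n) (c0 *: Y).
Proof.
move=> cc0 XY a b; rewrite !mxE; under eq_cvg do rewrite !mxE.
exact: cvgM cc0 (XY a b).
Qed.

Lemma mx_cvgM p q r (X1 : nat -> 'M[C]_(p, q)) (X2 : nat -> 'M[C]_(q, r)) Y1 Y2 :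
  mx_cvg X1 Y1 -> mx_cvg X2 Y2 -> mx_cvg (fun n => X1 n *m X2 n) (Y1 *m Y2).
Proof.
move=> X1Y1 X2Y2 a b; rewrite !mxE; under eq_cvg do rewrite !mxE.
by apply: cvgC_sum => k _; exact: cvgM (X1Y1 a k) (X2Y2 k b).
Qed.

Lemma mx_cvgX p (X : nat -> 'M[C]_p) Y m : mx_cvg X Y -> mx_cvg (fun n => X n ^+ m) (Y ^+ m).
Proof.
move=> XY; elim: m => [|m IH]; first exact: mx_cvg_cst.
move=> a b; rewrite exprS -mulmxE; under eq_cvg do rewrite exprS -mulmxE.
exact: mx_cvgM.
Qed.

Lemma cvgC_det p (X : nat -> 'M[C]_p) Y :
  mx_cvg X Y -> (fun n => \det (X n) : C^o) @ \oo --> (\det Y : C^o).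
Proof.
move=> XY; apply: cvgC_sum => s _; apply: cvgM; first exact: cvg_cst.
by apply: cvgC_prod => i _; apply: XY.
Qed.

Lemma mx_cvg_adj p (X : nat -> 'M[C]_p) Y : mx_cvg X Y -> mx_cvg (fun n => \adj (X n)) (\adj Y).
Proof.
move=> XY a b; rewrite !mxE; under eq_cvg do rewrite !mxE.
apply: cvgM; first exact: cvg_cst.
by apply: cvgC_det => i j; rewrite !mxE; under eq_cvg do rewrite !mxE; apply: XY.
Qed.

Lemma mx_cvg_invmx p (X : nat -> 'M[C]_p) Y : mx_cvg X Y -> Y \in unitmx ->
  mx_cvg (fun n => invmx (X n)) (invmx Y).
Proof.
move=> XY uY a b; have detY : \det Y != 0 by rewrite -unitfE -unitmxE.
have detX : \forall n \near \oo, \det (X n) != 0 :=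
  cvgr_neq0 (FF := eventually_filter) _ (cvgC_det XY) detY.
have -> : invmx Y a b = (\det Y)^-1 * \adj Y a b by rewrite /invmx uY mxE.
have eq_adj : \forall n \near \oo, (\det (X n))^-1 * \adj (X n) a b = invmx (X n) a b.
  by apply: filterS detX => n detXn; rewrite /invmx unitmxE unitfE detXn !mxE.
apply: cvg_trans (near_eq_cvg eq_adj) _.
apply: (@cvgM C^o nat \oo _ (fun n => (\det (X n))^-1) (fun n => \adj (X n) a b)).
  exact: (@cvgV C^o nat \oo _ (fun n => \det (X n)) _ detY (cvgC_det XY)).
exact: mx_cvg_adj.
Qed.

Definition mxseq_cvg p q (S : nat -> nat -> 'M[C]_(p, q)) (T : nat -> 'M[C]_(p, q)) :=
  forall n, mx_cvg (fun L => S L n) (T n).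

Lemma mxseq_cvg_cst p q (T : nat -> 'M[C]_(p, q)) : mxseq_cvg (fun=> T) T.
Proof. by move=> n; apply: mx_cvg_cst. Qed.

Lemma mxseq_cvg_bidiag p q (X0 X1 : nat -> 'M[C]_(p, q)) Y0 Y1 :
  mx_cvg X0 Y0 -> mx_cvg X1 Y1 -> mxseq_cvg (fun L => bidiag (X0 L) (X1 L)) (bidiag Y0 Y1).
Proof. by move=> X0Y0 X1Y1 [|[|n]]; [exact: X0Y0 | exact: X1Y1 | exact: mx_cvg_cst]. Qed.

Lemma mxseq_cvgB p q (S1 S2 : nat -> nat -> 'M[C]_(p, q)) T1 T2 :
  mxseq_cvg S1 T1 -> mxseq_cvg S2 T2 ->
  mxseq_cvg (fun L n => S1 L n - S2 L n) (fun n => T1 n - T2 n).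
Proof. by move=> S1T1 S2T2 n; apply: mx_cvgB. Qed.

Lemma mxseq_cvg_mxconv p q r
    (S1 : nat -> nat -> 'M[C]_(p, q)) (S2 : nat -> nat -> 'M[C]_(q, r)) T1 T2 :
  mxseq_cvg S1 T1 -> mxseq_cvg S2 T2 ->
  mxseq_cvg (fun L => mxconv (S1 L) (S2 L)) (mxconv T1 T2).
Proof.
move=> S1T1 S2T2 n a b; rewrite /mxconv summxE; under eq_cvg do rewrite summxE.
by apply: cvgC_sum => k _; apply: mx_cvgM.
Qed.

Lemma mxseq_cvg_geom_inv q (D : nat -> 'M[C]_q) D0 H : mx_cvg D D0 -> D0 \in unitmx ->
  mxseq_cvg (fun L => geom_inv (D L) H) (geom_inv D0 H).
Proof.
move=> DD0 uD0 n; rewrite /geom_inv; have DV := mx_cvg_invmx DD0 uD0.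
apply: mx_cvgM; last exact: DV.
by apply: mx_cvgX; apply: mx_cvgM; [exact: DV | exact: mx_cvg_cst].
Qed.

End MatrixConvergence.

Section ComplexNorm.
Variable R : realType.
Local Notation C := R[i].
Local Open Scope complex_scope.

Lemma normc_ge0 (z : C) : 0 <= Normc.normc z.
Proof. by case: z => a b; apply: sqrtr_ge0. Qed.

Lemma normcC (z : C) : (Normc.normc z)%:C = `|z|.
Proof. by case: z => a b; rewrite normc_def. Qed.

Lemma normc_real (x : R) : Normc.normc x%:C = `|x|.
Proof. by rewrite /= expr0n addr0 sqrtr_sqr. Qed.

Lemma cvgC_normcP (f : nat -> C) (l : C) :
  (f : nat -> C^o) @ \oo --> (l : C^o) <-> (fun n => Normc.normc (f n - l)) @ \oo --> (0 : R).
Proof.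
have dist n : `|0 - Normc.normc (f n - l)| = Normc.normc (f n - l).
  by rewrite sub0r normrN ger0_norm ?normc_ge0.
split => /cvgrPdist_lt fl; apply/cvgrPdist_lt => e e0.
  have e0C : (0 : C^o) < e%:C by rewrite ltcR.
  by apply: filterS (fl _ e0C) => n; rewrite dist -ltcR normcC distrC.
move: e0; rewrite ltcE => /andP[/eqP Ime Ree].
have Ime0 : complex.Im e = 0 by rewrite Ime.
by apply: filterS (fl _ Ree) => n; rewrite dist distrC -normcC ltcE /= Ime0 eqxx.
Qed.

Lemma cvg_real_complex (r : nat -> R) (l : R) :
  r @ \oo --> l -> ((fun n => (r n)%:C) : nat -> C^o) @ \oo --> (l%:C : C^o).
Proof.
move=> rl; apply/cvgC_normcP.
under eq_cvg do rewrite -rmorphB normc_real.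
have /cvg_norm : (fun n => r n - l) @ \oo --> (0 : R) by apply/subr_cvg0.
by rewrite normr0.
Qed.

Lemma normc_expi (y : R) : Normc.normc (expi y) = 1.
Proof. by rewrite /= cos2Dsin2 sqrtr1. Qed.

End ComplexNorm.

Section Spectrum.
Variable R : realType.
Local Notation C := R[i].
Local Open Scope complex_scope.

Lemma eigenvalue_normc_le n (B : 'M[C]_n) (l : C) : eigenvalue B l ->
  Normc.normc l <= \sum_j \sum_i Normc.normc (B i j).
Proof.
move/eigenvalueP => [w wB w0]; rewrite -lecR normcC.
have -> : (\sum_j \sum_i Normc.normc (B i j))%:C = \sum_j \sum_i `|B i j|.
  rewrite rmorph_sum; apply: eq_bigr => j _.
  by rewrite rmorph_sum; apply: eq_bigr => i _; exact: normcC.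
set S := \sum_j `|w 0 j|.
have wS i : `|w 0 i| <= S by rewrite /S (bigD1 i) //= lerDl sumr_ge0.
have S0 : 0 < S.
  move/matrix0Pn: w0 => [i0 [j wj]]; rewrite (ord1 i0) in wj.
  by apply: lt_le_trans (wS j); rewrite normr_gt0.
rewrite -(ler_pM2r S0).
have -> : `|l| * S = \sum_j `|\sum_i w 0 i * B i j|.
  rewrite /S mulr_sumr; apply: eq_bigr => j _.
  by move/matrixP: wB => /(_ 0 j); rewrite !mxE => ->; rewrite normrM.
rewrite mulr_suml; apply: ler_sum => j _.
apply: le_trans (ler_norm_sum _ _ _) _.
rewrite mulr_suml; apply: ler_sum => i _.
by rewrite normrM mulrC ler_wpM2l.
Qed.

Lemma specrad_ge_eigen n (B : 'M[C]_n) (l : C) (v : 'cV[C]_n) :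
  v != 0 -> B *m v = l *: v -> Normc.normc l <= specrad B.
Proof.
move=> v0 Bv; have eig : eigenvalue B l.
  rewrite /eigenvalue /eigenspace kermx_eq0 row_free_unit; apply: contra v0 => u.
  have : (B - l%:M) *m v = 0 by rewrite mulmxBl Bv mul_scalar_mx subrr.
  by move/(congr1 (mulmx (invmx (B - l%:M)))); rewrite mulmxA mulVmx // mul1mx mulmx0 => ->.
apply: ub_le_sup; last by exists l.
by exists (\sum_j \sum_i Normc.normc (B i j)) => _ [l' eig' <-]; apply: eigenvalue_normc_le.
Qed.

Lemma ess_sup_on_itv_ge (a b y : R) (f : R -> R) : a < b ->
  (forall x, `[a, b]%classic x -> y <= f x) -> (y%:E <= ess_sup_on `[a, b] f)%E.
Proof.
move=> ab fy; apply/ereal_infP => z [N [mN N0 sN]].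
rewrite leNgt; apply/negP => zy.
have abN : `[a, b] `<=` N.
  move=> x abx; apply: sN => /(_ abx); apply/negP; rewrite -ltNge.
  by apply: lt_le_trans zy _; rewrite lee_fin fy.
have le_abN := le_measure lebesgue_measure (mem_set (measurable_itv `[a, b])) (mem_set mN) abN.
have : (lebesgue_measure `[a, b]%classic <= 0)%E.
  by apply: le_trans le_abN _; rewrite le_eqVlt; apply/orP; left; apply/eqP; exact: N0.
by rewrite lebesgue_measure_itv /= lte_fin ab lee_fin subr_le0 leNgt ab.
Qed.

End Spectrum.

(** * The limit operator and its symbol *)

Section ToeplitzLimit.
Variable R : realType.
Local Notation C := R[i].

Lemma blk_btoep L q (s : nat -> 'M[C]_q) (i j : nat) : (i < L)%N -> (j < L)%N ->
  blk (btoep L s) i j = if (j <= i)%N then s (i - j)%N else 0.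
Proof.
move=> iL jL.
rewrite /blk (insubT (fun k => (k < L)%N) iL) (insubT (fun k => (k < L)%N) jL).
by apply/matrixP => a b; rewrite mxE btoepE /=; case: ifP; rewrite ?mxE.
Qed.

Lemma btoep_block_toeplitz_limit q (X : forall L, 'M[C]_(L * q))
    (s : nat -> nat -> 'M[C]_q) (t : nat -> 'M[C]_q) :
  (\forall L \near \oo, X L = btoep L (s L)) -> mxseq_cvg s t -> block_toeplitz_limit X t.
Proof.
move=> Xs st i j a b; apply/cvgC_normcP.
have blkX : \forall L \near \oo,
    (if (j <= i)%N then s L (i - j)%N else 0) a b = blk (X L) i j a b.
  apply: filterS2 Xs (nbhs_infty_gt (maxn i j)) => L -> ijL.
  by rewrite blk_btoep // (leq_ltn_trans _ ijL) // ?leq_maxl ?leq_maxr.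
apply: cvg_trans (near_eq_cvg blkX) _.
case: (j <= i)%N; first exact: st.
exact: (@cvg_cst C^o).
Qed.

Lemma symbol_bidiag n (T1 : 'M[C]_n) x : symbol (bidiag 0 T1) 2 x = expi x *: T1.
Proof. by rewrite /symbol big_ord_recr big_ord1 /= scaler0 add0r mul1r. Qed.

Lemma cvg_scaled_inv_nat (c T : R) : (fun L : nat => c * (T / L%:R)) @ \oo --> (0 : R).
Proof.
have inv0 : (fun L : nat => (L%:R : R)^-1) @ \oo --> (0 : R).
  apply/gtr0_cvgV0; last exact: cvgr_idn.
  by apply: filterS (nbhs_infty_gt 0) => L; rewrite ltr0n.
rewrite -(mulr0 c) -(mulr0 T).
exact: cvgM (cvg_cst c) (cvgM (cvg_cst T) inv0).
Qed.

End ToeplitzLimit.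

Section PFASSTLimit.
Variable R : realType.
Local Notation C := R[i].
Local Open Scope complex_scope.
Variables (M N Mc Nc : nat) (tf : 'I_M -> R) (tc : 'I_Mc -> R)
  (QD : 'M[R]_M) (QDc : 'M[R]_Mc) (A : 'M[C]_N) (Ac : 'M[C]_Nc)
  (TFCA : 'M[R]_(Nc, N)) (TCFA : 'M[R]_(N, Nc)).
Local Notation Hf := (Hf R M N).
Local Notation Hc := (Hc R Mc Nc).
Local Notation TFC_blk := (TFC_blk tf tc TFCA).
Local Notation TCF_blk := (TCF_blk tf tc TCFA).
Local Notation T_PFASST_seq := (T_PFASST_seq tf tc QD QDc A Ac TFCA TCFA).

Lemma T_PFASST_seq_cvg (x : nat -> R) : x @ \oo --> (0 : R) ->
  mxseq_cvg (fun L => T_PFASST_seq (x L)) (T_PFASST_seq 0).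
Proof.
move=> /cvg_real_complex x0.
have diag q (Y : 'M[C]_q) : mx_cvg (fun L => 1%:M - (x L)%:C *: Y) (1%:M - 0%:C *: Y).
  by apply: mx_cvgB; [exact: mx_cvg_cst | apply: mx_cvgZ; [exact: x0 | exact: mx_cvg_cst]].
have unit0 q (Y : 'M[C]_q) : 1%:M - 0%:C *: Y \in unitmx by rewrite pencil0 unitmx1.
have Cseq : mxseq_cvg (fun L => Cmat_seq tf A (x L)) (Cmat_seq tf A 0).
  by apply: mxseq_cvg_bidiag; [exact: diag | exact: mx_cvg_cst].
have Sseq : mxseq_cvg (fun L => T_S_seq tf QD A (x L)) (T_S_seq tf QD A 0).
  rewrite /T_S_seq; apply: mxseq_cvgB; first exact: mxseq_cvg_cst.
  exact: mxseq_cvg_mxconv (mxseq_cvg_geom_inv (diag _ _) (unit0 _ _)) Cseq.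
have CGCseq : mxseq_cvg (fun L => T_CGC_seq tf tc QDc A Ac TFCA TCFA (x L))
    (T_CGC_seq tf tc QDc A Ac TFCA TCFA 0).
  rewrite /T_CGC_seq; apply: mxseq_cvgB; first exact: mxseq_cvg_cst.
  have Ptil_inv := mxseq_cvg_geom_inv (H := Hc) (diag _ (cplx QDc *t Ac)) (unit0 _ _).
  have TCF_Ptil := mxseq_cvg_mxconv (mxseq_cvg_cst (T := bidiag TCF_blk 0)) Ptil_inv.
  have TCF_Ptil_TFC := mxseq_cvg_mxconv TCF_Ptil (mxseq_cvg_cst (T := bidiag TFC_blk 0)).
  exact: mxseq_cvg_mxconv TCF_Ptil_TFC Cseq.
exact: mxseq_cvg_mxconv Sseq CGCseq.
Qed.

Lemma T_PFASST_block_toeplitz_limit (mu : nat -> R) :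
  mu @ \oo --> (0 : R) ->
  (forall L, Phat QD A L (mu L) \in unitmx) -> (forall L, Ptil QDc Ac L (mu L) \in unitmx) ->
  Hc *m TFC_blk = TFC_blk *m Hf ->
  block_toeplitz_limit (fun L => T_PFASST tf tc QD QDc A Ac TFCA TCFA L (mu L))
    (bidiag 0 (Hf *m (1%:M - TCF_blk *m TFC_blk))).
Proof.
move=> mu0 uPhat uPtil comm.
apply: (btoep_block_toeplitz_limit (s := fun L => T_PFASST_seq (mu L))).
  apply: filterS (nbhs_infty_gt 0) => L L0; apply: T_PFASST_btoep.
    by move: (uPhat L); rewrite Phat_btoep => /(btoep_unit0 L0).
  by move: (uPtil L); rewrite Ptil_btoep => /(btoep_unit0 L0).
by move=> n; rewrite -(T_PFASST_seq0 QD QDc A Ac TCFA comm n); apply: T_PFASST_seq_cvg.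
Qed.

Lemma mul_Nmat_const1 n : cplx (Nmat R n) *m const_mx 1 = const_mx 1 :> 'cV[C]_n.
Proof.
apply/matrixP => i k; case: n i => [[]//|n] i.
rewrite !mxE (bigD1 ord_max) //= big1 => [|j jn]; rewrite !mxE.
  by rewrite eqxx rmorph1 mul1r addr0.
have -> : (j.+1 == n.+1) = false.
  by rewrite eqSS; apply: contraNF jn => /eqP jn; apply/eqP/val_inj.
by rewrite rmorph0 mul0r.
Qed.

Lemma coarse_kernel_eigen (w : 'cV[C]_N) : cplx TFCA *m w = 0 ->
  Hf *m (1%:M - TCF_blk *m TFC_blk) *m ((const_mx 1 : 'cV[C]_M) *t w) = const_mx 1 *t w.
Proof.
move=> Tw; have TFCv : TFC_blk *m ((const_mx 1 : 'cV[C]_M) *t w) = 0.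
  by rewrite /TFC_blk tensmx_mul Tw tensmx0.
rewrite -mulmxA mulmxBl mul1mx -mulmxA TFCv mulmx0 subr0.
by rewrite /Hf tensmx_mul mul_Nmat_const1 mul1mx.
Qed.

Lemma tens_const_neq0 n m (w : 'cV[C]_m) : (0 < n)%N -> w != 0 ->
  (const_mx 1 : 'cV[C]_n) *t w != 0.
Proof.
case: n => // n _ /matrix0Pn[b [z wb]]; apply/matrix0Pn.
by exists (mxtens_index (ord0, b)), (mxtens_index (z, z)); rewrite tensmxE mxE mul1r.
Qed.

Lemma specrad_symbol_ge1 x : (0 < M)%N -> (Nc < N)%N ->
  1 <= specrad (symbol (bidiag 0 (Hf *m (1%:M - TCF_blk *m TFC_blk))) 2 x).
Proof.
move=> M0 NcN; have [w w0 Tw] := exists_kernel_vector (cplx TFCA) NcN.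
rewrite -(normc_expi x); apply: (specrad_ge_eigen (tens_const_neq0 M0 w0)).
by rewrite symbol_bidiag -scalemxAl coarse_kernel_eigen.
Qed.

End PFASSTLimit.

Unset Implicit Arguments.

Theorem theorem6 (R : realType) (M N Mc Nc : nat)
  (tf : 'I_M -> R) (tc : 'I_Mc -> R)
  (QD : 'M[R]_M) (QDc : 'M[R]_Mc) (A : 'M[R[i]]_N) (Ac : 'M[R[i]]_Nc)
  (TFCA : 'M[R]_(Nc, N)) (TCFA : 'M[R]_(N, Nc))
  (Tend c : R) (mu : nat -> R) :
  (0 < Mc)%N -> (Mc <= M)%N -> (Nc < N)%N ->
  is_right_radau tf -> is_right_radau tc ->
  is_trig_mx QD -> is_trig_mx QDc ->
  0 < Tend -> 0 < c -> (forall L : nat, mu L = c * (Tend / L%:R)) ->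
  (forall L : nat, Phat QD A L (mu L) \in unitmx) ->
  (forall L : nat, Ptil QDc Ac L (mu L) \in unitmx) ->
  (forall L : nat,
     (cplx (Emat R L) *t Hc R Mc Nc) *m TFC tf tc TFCA L
     = TFC tf tc TFCA L *m (cplx (Emat R L) *t Hf R M N)) ->
  exists t : nat -> 'M[R[i]]_(M * N),
    block_toeplitz_limit
      (fun L => T_PFASST tf tc QD QDc A Ac TFCA TCFA L (mu L)) t /\
    exists K : nat, (forall k : nat, (K <= k)%N -> t k = 0) /\
      (1%:E <= ess_sup_on `[(- pi)%R, (pi : R)] (fun x => specrad (symbol t K x)))%E.
Proof.
move=> Mc0 McM NcN _ _ _ _ _ _ mu_def uPhat uPtil commE.
have mu0 : mu @ \oo --> (0 : R) by rewrite (funext mu_def); exact: cvg_scaled_inv_nat.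
exists (bidiag 0 (Hf R M N *m (1%:M - TCF_blk tf tc TCFA *m TFC_blk tf tc TFCA))).
split.
  exact: T_PFASST_block_toeplitz_limit mu0 uPhat uPtil (Hc_TFC_comm (commE 2%N)).
exists 2%N; split; first by case=> [|[|k]].
apply: ess_sup_on_itv_ge => [|x _]; first by rewrite gtrN ?pi_gt0.
exact: specrad_symbol_ge1 (leq_trans Mc0 McM) NcN.
Qed.
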